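(* Consider the multiset combinatorial auction model described in the context. An auction that uses only demand queries cannot guarantee even $55\%$ efficiency, even if it asks all (uncountably many) possible demand queries, i.e., one for every price vector in $[0,\infty)^m$, and even if each bidder additionally reports her true value for every bundle she requested in response to those demand queries. Precisely: there exist $n,m,c$ and value functions $(v_i)_{i\in N}$ such that, for every set $P\subseteq[0,\infty)^m$ of demand-query prices (in particular $P=[0,\infty)^m$), there are truthful demand-query responses and an allocation maximizing the inferred social welfare $\sum_i\tilde v_i(a_i;R_i)$ over $\mathcal{F}$ whose efficiency is less than $55\%$; and the same holds when the reports $R_i$ additionally contain value-query responses $(x,v_i(x))$ for every bundle $x$ that bidder $i$ requested in some demand query in $P$.
   Context: Multiset combinatorial auction: bidders $N=\{1,\dots,n\}$, items $M=\{1,\dots,m\}$ with capacities $c\in\mathbb{N}^m$. Bundles are $x\in\mathcal{X}=\{0,\dots,c_1\}\times\cdots\times\{0,\dots,c_m\}$. Each bidder $i$ has a value function $v_i:\mathcal{X}\to\mathbb{R}_{\ge0}$. Feasible allocations: $\mathcal{F}=\{a\in\mathcal{X}^n:\sum_i a_{ij}\le c_j\ \forall j\}$. Social welfare $V(a)=\sum_i v_i(a_i)$; efficiency of $a$ is $V(a)/\max_{a'\in\mathcal{F}}V(a')$. A demand query at prices $p\in\mathbb{R}^m_{\ge0}$ is answered truthfully by bidder $i$ with some $x_i^*(p)\in\arg\max_{x\in\mathcal{X}}\{v_i(x)-\langle p,x\rangle\}$. A value query for $x$ is answered with $v_i(x)$. With reports $R_i$ consisting of demand responses $R_i^{DQ}$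 (pairs $(x,p)$) and value responses $R_i^{VQ}$ (pairs $(x,v_i(x))$), the inferred value is $\tilde v_i(x;R_i)=v_i(x)$ if $x$ appears in $R_i^{VQ}$ and otherwise the supremum (a maximum when finitely many queries are asked) of $\{\langle x,p\rangle:(x,p)\in R_i^{DQ}\}\cup\{0\}$. The auction allocates according to a solution of the winner determination problem $\max_{a\in\mathcal{F}}\sum_i\tilde v_i(a_i;R_i)$. *)

From mathcomp Require Import all_boot all_order all_algebra.
From mathcomp Require Import all_classical all_reals.
From mathcomp Require Import Rstruct.
Set Implicit Arguments. Unset Strict Implicit. Unset Printing Implicit Defensive.
Import Order.TTheory GRing.Theory Num.Theory.
Local Open Scope ring_scope.
Local Open Scope classical_set_scope.

Notation real := Rdefinitions.R.

Definition bundle (m : nat) := 'I_m -> nat.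
Definition price (m : nat) := 'I_m -> real.

Definition in_X (m : nat) (c : 'I_m -> nat) (x : bundle m) : Prop :=
  forall j, (x j <= c j)%N.

Definition nonneg_price (m : nat) (p : price m) : Prop := forall j, 0 <= p j.

Definition dot (m : nat) (x : bundle m) (p : price m) : real :=
  \sum_(j < m) (x j)%:R * p j.

Definition feasible (n m : nat) (c : 'I_m -> nat) (a : 'I_n -> bundle m) : Prop :=
  (forall i, in_X c (a i)) /\ (forall j, (\sum_(i < n) a i j <= c j)%N).

Definition welfare (n m : nat) (v : 'I_n -> bundle m -> real)
  (a : 'I_n -> bundle m) : real := \sum_(i < n) v i (a i).

(* Optimal social welfare max_{a' in F} V(a') (F is finite and nonempty). *)
Definition opt_welfare (n m : nat) (c : 'I_m -> nat)
  (v : 'I_n -> bundle m -> real) : real :=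
  sup [set welfare v a | a in [set a | feasible c a]].

Definition demand_answer (m : nat) (c : 'I_m -> nat) (w : bundle m -> real)
  (p : price m) (x : bundle m) : Prop :=
  in_X c x /\ forall y, in_X c y -> w y - dot y p <= w x - dot x p.

Definition truthful_responses (n m : nat) (c : 'I_m -> nat)
  (v : 'I_n -> bundle m -> real) (P : set (price m))
  (d : 'I_n -> price m -> bundle m) : Prop :=
  forall i p, P p -> demand_answer c (v i) p (d i p).

Definition requested (n m : nat) (P : set (price m))
  (d : 'I_n -> price m -> bundle m) (i : 'I_n) (x : bundle m) : Prop :=
  exists2 p, P p & d i p = x.

(* Inferred value tilde v_i(x; R_i).  R_i^DQ = {(d i p, p) | p in P};
   if withVQ, R_i^VQ = {(x, v_i x) | x requested by i}, otherwise empty. *)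
Definition inferred_value (n m : nat) (v : 'I_n -> bundle m -> real)
  (P : set (price m)) (d : 'I_n -> price m -> bundle m) (withVQ : bool)
  (i : 'I_n) (x : bundle m) : real :=
  if `[< withVQ /\ requested P d i x >] then v i x
  else sup ([set dot x p | p in [set p | P p /\ d i p = x]] `|` [set 0]).

Definition inferred_welfare (n m : nat) (v : 'I_n -> bundle m -> real)
  (P : set (price m)) (d : 'I_n -> price m -> bundle m) (withVQ : bool)
  (a : 'I_n -> bundle m) : real :=
  \sum_(i < n) inferred_value v P d withVQ i (a i).

Definition wdp_solution (n m : nat) (c : 'I_m -> nat)
  (v : 'I_n -> bundle m -> real) (P : set (price m))
  (d : 'I_n -> price m -> bundle m) (withVQ : bool) (a : 'I_n -> bundle m) : Prop :=
  feasible c a /\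
  forall a', feasible c a' -> inferred_welfare v P d withVQ a' <= inferred_welfare v P d withVQ a.

(* Two bidders share one item with 11 copies, and each values x copies at min(x, 6).
   At every nonnegative price a truthful bidder may answer a demand query with 6 copies
   (price below 1) or with none, so the reports mention only these two bundles and every
   other bundle gets inferred value 0.  Since 6 + 6 > 11, an inferred-welfare maximiser
   may give 6 copies to one bidder and nothing to the other, for a true welfare of 6,
   whereas the split 6 + 5 achieves 11; and 6/11 < 55/100. *)
From mathcomp Require Import all_boot all_order all_algebra.
From mathcomp Require Import all_classical all_reals.
From mathcomp Require Import Rstruct.
From mathcomp Require Import lra.
Import Order.TTheory GRing.Theory Num.Theory.
Local Open Scope ring_scope.
Local Open Scope classical_set_scope.

Lemma inferred_value_ge0 n m (v : 'I_n -> bundle m -> real) P d withVQ i x :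
  0 <= v i x -> 0 <= inferred_value v P d withVQ i x.
Proof.
move=> vx; rewrite /inferred_value; case: asboolP => // _.
set S := _ `|` _; have [supS|/sup_out-> //] := pselect (has_sup S).
by apply: (sup_upper_bound supS); right.
Qed.

Lemma inferred_value_unrequested n m (v : 'I_n -> bundle m -> real) P d withVQ i x :
  ~ requested P d i x -> inferred_value v P d withVQ i x = 0.
Proof.
move=> unreq; rewrite /inferred_value; case: asboolP => [[_ /unreq] //|_].
rewrite (_ : _ `|` _ = [set 0]) ?sup1 //; apply/seteqP; split=> r.
- by case=> [[p [Pp dpx] _]|//]; case: unreq; exists p.
- by move=> ->; right.
Qed.

Lemma inferred_value_empty_bundle n m (v : 'I_n -> bundle m -> real) P d withVQ i :
  v i (fun _ => 0%N) = 0 -> inferred_value v P d withVQ i (fun _ => 0%N) = 0.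
Proof.
move=> v0; rewrite /inferred_value; case: asboolP => // _.
rewrite (_ : _ `|` _ = [set 0]) ?sup1 //; apply/seteqP; split=> r.
- by case=> [[p _ <-]|//]; rewrite /dot big1 // => j _; rewrite mul0r.
- by move=> ->; right.
Qed.

Lemma welfare_le_opt_welfare n m (c : 'I_m -> nat) (v : 'I_n -> bundle m -> real) B a :
  (forall a', feasible c a' -> welfare v a' <= B) ->
  feasible c a -> welfare v a <= opt_welfare c v.
Proof.
move=> bounded feas_a; apply: sup_upper_bound; last by exists a.
by split; [exists (welfare v a), a | exists B => _ [a' /bounded + <-]].
Qed.

Definition bundle1 (q : nat) : bundle 1 := fun _ => q.

Lemma bundle1E (x : bundle 1) : x = bundle1 (x ord0).
Proof. by apply: funext => j; rewrite (ord1 j). Qed.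

Lemma dot1 (x : bundle 1) (p : price 1) : dot x p = (x ord0)%:R * p ord0.
Proof. by rewrite /dot big_ord1. Qed.

Lemma ord2P (i : 'I_2) : i = ord0 \/ i = ord_max.
Proof. by case: i => [[|[|//]]] i_lt2; [left|right]; apply: val_inj. Qed.

Lemma sum_ord2 (V : nmodType) (F : 'I_2 -> V) : \sum_(i < 2) F i = F ord0 + F ord_max.
Proof. by rewrite big_ord_recr big_ord1; congr (F _ + _); apply: val_inj. Qed.

Lemma sumn_ord2 (F : 'I_2 -> nat) : (\sum_(i < 2) F i = F ord0 + F ord_max)%N.
Proof. by rewrite big_ord_recr big_ord1; congr (F _ + _); apply: val_inj. Qed.

Lemma feasible2E (c : 'I_1 -> nat) (a : 'I_2 -> bundle 1) :
  feasible c a <-> (a ord0 ord0 + a ord_max ord0 <= c ord0)%N.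
Proof.
rewrite /feasible /in_X; split=> [[_ /(_ ord0)]|sum_le]; first by rewrite sumn_ord2.
split=> [i j|j]; rewrite (ord1 j) ?sumn_ord2 //; apply: leq_trans sum_le.
by case: (ord2P i) => ->; rewrite ?leq_addr ?leq_addl.
Qed.

Section CappedValues.

Variables k c : nat.
Hypotheses (k_le_c : (k <= c)%N) (c_lt_kk : (c < k + k)%N).

Definition capacity : 'I_1 -> nat := fun _ => c.

Definition capped_value : 'I_2 -> bundle 1 -> real := fun _ x => (minn (x ord0) k)%:R.

Definition threshold_demand : 'I_2 -> price 1 -> bundle 1 :=
  fun _ p => bundle1 (if p ord0 < 1 then k else 0).

Lemma capped_profit_le_low (y : nat) (p : real) : 0 <= p -> p < 1 ->
  (minn y k)%:R - y%:R * p <= k%:R - k%:R * p.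
Proof.
move=> p_ge0 p_lt1; case: (leqP y k) => [y_le_k|k_lt_y].
- have : y%:R <= k%:R :> real by rewrite ler_nat.
  move: y%:R k%:R => r s r_le_s; nra.
- have : k%:R <= y%:R :> real by rewrite ler_nat ltnW.
  move: y%:R k%:R => r s s_le_r; nra.
Qed.

Lemma capped_profit_le_high (y : nat) (p : real) : 1 <= p ->
  (minn y k)%:R - y%:R * p <= 0.
Proof.
move=> p_ge1; have : (minn y k)%:R <= y%:R :> real by rewrite ler_nat geq_minl.
have : 0 <= y%:R :> real by [].
move: y%:R (minn y k)%:R => r s r_ge0 s_le_r; nra.
Qed.

Lemma threshold_demand_truthful P :
  (forall p, P p -> nonneg_price p) ->
  truthful_responses capacity capped_value P threshold_demand.
Proof.
move=> P_nonneg i p /P_nonneg/(_ ord0) p_ge0.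
split=> [j|y _]; first by rewrite /threshold_demand /bundle1; case: ifP.
rewrite !dot1 /capped_value /threshold_demand /bundle1.
case: ifP => [p_lt1|/negbT]; first by rewrite minnn; exact: capped_profit_le_low.
rewrite -leNgt => p_ge1; rewrite min0n mul0r subr0; exact: capped_profit_le_high.
Qed.

Lemma k_gt0 : (0 < k)%N.
Proof. by move: c_lt_kk; case: k. Qed.

Definition favour (i0 : 'I_2) : 'I_2 -> bundle 1 :=
  fun i => bundle1 (if i == i0 then k else 0).

Lemma favour_feasible i0 : feasible capacity (favour i0).
Proof.
apply/feasible2E; rewrite /favour /bundle1.
by case: (ord2P i0) => ->; rewrite /= ?addn0 ?add0n.
Qed.

Lemma welfare_favour i0 : welfare capped_value (favour i0) = k%:R.
Proof.
rewrite /welfare sum_ord2 /capped_value /favour /bundle1.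
by case: (ord2P i0) => ->; rewrite /= minnn min0n ?addr0 ?add0r.
Qed.

Lemma opt_welfare_capped_ge : c%:R <= opt_welfare capacity capped_value.
Proof.
pose split_ka : 'I_2 -> bundle 1 := fun i => bundle1 (if i == ord0 then k else (c - k)%N).
have feas_split : feasible capacity split_ka by apply/feasible2E; rewrite /= subnKC.
have -> : c%:R = welfare capped_value split_ka.
  rewrite /welfare sum_ord2 /capped_value /split_ka /bundle1 /= minnn -natrD.
  by rewrite (minn_idPl _) ?subnKC // leq_subLR ltnW.
apply: (@welfare_le_opt_welfare _ _ _ _ (k + k)%:R _ _ feas_split) => a _.
rewrite /welfare sum_ord2 /capped_value natrD.
by apply: lerD; rewrite ler_nat geq_minr.
Qed.

Variables (P : set (price 1)) (withVQ : bool).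

Local Notation inferred := (inferred_value capped_value P threshold_demand withVQ).
Local Notation inferred_k i := (inferred i (bundle1 k)).

Lemma inferred_capped_value i x : inferred i x = if x ord0 == k then inferred_k i else 0.
Proof.
rewrite {1}(bundle1E x); case: eqP => [-> //|x_neq_k].
have [x0|x_gt0] := posnP (x ord0).
  by rewrite x0; apply: inferred_value_empty_bundle; rewrite /capped_value min0n.
apply: inferred_value_unrequested => -[p _ /(congr1 (fun y => y ord0))].
rewrite /threshold_demand /bundle1; case: ifP => _ x_eq; first exact: x_neq_k.
by rewrite -x_eq in x_gt0.
Qed.

Lemma inferred_k_ge0 i : 0 <= inferred_k i.
Proof. exact: inferred_value_ge0. Qed.

Lemma inferred_welfare_le_max a :
  feasible capacity a -> inferred_welfare capped_value P threshold_demand withVQ a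
                         <= Num.max (inferred_k ord0) (inferred_k ord_max).
Proof.
move=> /feasible2E sum_le; rewrite /inferred_welfare sum_ord2.
rewrite (inferred_capped_value _ (a ord0)) (inferred_capped_value _ (a ord_max)).
have := inferred_k_ge0 ord0; have := inferred_k_ge0 ord_max.
case: eqP => [a0k|_]; case: eqP => [a1k|_] inf1_ge0 inf0_ge0.
- by move: sum_le; rewrite a0k a1k leqNgt c_lt_kk.
- by rewrite addr0 le_max lexx.
- by rewrite add0r le_max lexx orbT.
- by rewrite addr0 le_max inf0_ge0.
Qed.

Lemma inferred_welfare_favour i0 :
  inferred_welfare capped_value P threshold_demand withVQ (favour i0) = inferred_k i0.
Proof.
rewrite /inferred_welfare sum_ord2.
rewrite (inferred_capped_value _ (favour _ ord0)) (inferred_capped_value _ (favour _ ord_max)).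
rewrite /favour /bundle1.
have k_neq0 : (0 == k) = false by rewrite eq_sym gtn_eqF ?k_gt0.
by case: (ord2P i0) => ->; rewrite /= eqxx k_neq0 ?addr0 ?add0r.
Qed.

Lemma favour_wdp_solution :
  wdp_solution capacity capped_value P threshold_demand withVQ
    (favour (if inferred_k ord_max <= inferred_k ord0 then ord0 else ord_max)).
Proof.
split=> [|a feas_a]; first exact: favour_feasible.
apply: le_trans (inferred_welfare_le_max _ feas_a) _; rewrite inferred_welfare_favour.
by case: (leP (inferred_k ord_max) (inferred_k ord0)).
Qed.

End CappedValues.

Theorem theorem3p2 :
  exists (n m : nat) (c : 'I_m -> nat) (v : 'I_n -> bundle m -> real),
    (forall i x, in_X c x -> 0 <= v i x) /\
    forall (P : set (price m)), (forall p, P p -> nonneg_price p) ->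
    forall withVQ : bool,
    exists d : 'I_n -> price m -> bundle m,
      truthful_responses c v P d /\
      exists a : 'I_n -> bundle m,
        wdp_solution c v P d withVQ a /\
        welfare v a < (55 / 100) * opt_welfare c v.
Proof.
exists 2%N, 1%N, (capacity 11), (capped_value 6).
split=> [i x _|P P_nonneg withVQ]; first exact: ler0n.
exists (threshold_demand 6); split; first exact: threshold_demand_truthful.
eexists; split; first exact: favour_wdp_solution.
rewrite welfare_favour; have := @opt_welfare_capped_ge 6 11 isT isT; lra.
Qed.
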